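(* Let $f_1,\dots,f_n:\mathbb{R}^d\to\mathbb{R}$ be such that each $f_i$ is $L_i$-smooth and $\mu_i$-strongly convex, with minimizer $x_i$. Let $\alpha_1,\dots,\alpha_n\in(0,1)$, $\tilde f(x) = \frac{1}{n}\sum_{i=1}^n f_i(\alpha_i x + (1-\alpha_i)x_i)$, $\hat L = \frac{1}{n}\sum_i L_i$, $\hat\mu = \frac{1}{n}\sum_i \mu_i$, $L_\alpha = \frac{1}{n}\sum_i \alpha_i^2 L_i$, $\mu_\alpha = \frac{1}{n}\sum_i\alpha_i^2\mu_i$, $w_i = \frac{\alpha_i^2 L_i}{nL_\alpha}$, $x^{\mathrm{avg}} = \sum_i w_i x_i$, $D = \max_{i\neq j}\|x_i-x_j\|^2$ and $V = \sum_i w_i\|x_i - x^{\mathrm{avg}}\|^2$. Run distributed gradient descent $x^{k+1} = x^k - \frac{\gamma}{n}\sum_{i=1}^n \alpha_i \nabla f_i(\alpha_i x^k + (1-\alpha_i)x_i)$ with stepsize $\gamma = 1/L_\alpha$, starting from $x^0 = x^{\mathrm{avg}}$. Then for every $K \geq 0$: (i) with $\alpha_{\max} = \max_i \alpha_i$, $\tilde f(x^K) - \min_x \tilde f(x) \leq \left(1 - \frac{\mu_\alpha}{L_\alpha}\right)^K \frac{\alpha_{\max}^2 \hat L D}{2}$; (ii) if $\alpha_i = \beta$ for all $i$, then $\tilde f(x^K) - \min_x\tilde f(x) \leq \left(1 - \frac{\hat\mu}{\hat L}\right)^K \frac{\beta^2\hat L V}{2}$.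
   Context: A differentiable $g$ is $L$-smooth if $\|\nabla g(x)-\nabla g(y)\|\leq L\|x-y\|$ for all $x,y$, and $\mu$-strongly convex if $g(x)\geq g(y)+\langle\nabla g(y),x-y\rangle+\frac{\mu}{2}\|x-y\|^2$ for all $x,y$. *)

From HB Require Import structures.
From mathcomp Require Import all_boot all_order all_algebra.
From mathcomp Require Import all_classical all_reals all_analysis.
Set Implicit Arguments. Unset Strict Implicit. Unset Printing Implicit Defensive.
Import Order.TTheory GRing.Theory Num.Theory.
Import numFieldNormedType.Exports.
Local Open Scope ring_scope.

Section Defs.
Variables (R : realType) (d : nat).

(* Euclidean inner product and Euclidean norm on R^d
   (the default norm on 'rV[R]_d in MathComp-Analysis is the sup norm,
   so we use the Euclidean one explicitly). *)
Definition dot (u v : 'rV[R]_d) : R := \sum_(j < d) u 0 j * v 0 j.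
Definition enorm (u : 'rV[R]_d) : R := Num.sqrt (dot u u).

Definition grad (f : 'rV[R]_d -> R) (x : 'rV[R]_d) : 'rV[R]_d :=
  \row_(j < d) ('d f x (delta_mx 0 j : 'rV[R]_d) : R).

Definition smooth (L : R) (f : 'rV[R]_d -> R) : Prop :=
  (forall x, differentiable f x) /\
  forall x y, enorm (grad f x - grad f y) <= L * enorm (x - y).

Definition strongly_convex (mu : R) (f : 'rV[R]_d -> R) : Prop :=
  forall x y, f y + dot (grad f y) (x - y) + mu / 2 * enorm (x - y) ^+ 2 <= f x.

End Defs.

From HB Require Import structures.
From mathcomp Require Import all_boot all_order all_algebra.
From mathcomp Require Import all_classical all_reals all_analysis.
From mathcomp Require Import ring lra.

(* Relative to the averaged gradient, the objective ftilde inherits from the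
   f_i a quadratic upper bound with constant L_alpha (descent lemma) and a
   quadratic lower bound with constant mu_alpha (strong convexity), so one
   gradient step of length 1 / L_alpha contracts the optimality gap by the
   factor 1 - mu_alpha / L_alpha.  The descent lemma is obtained without
   integration, by summing the convexity inequality along a finely subdivided
   segment.  Since the gradient of f_i vanishes at x_i, the initial gap is at
   most (1/n) sum_i alpha_i^2 L_i / 2 |x - x_i|^2; at x = x_avg, a convex
   combination of the x_i, this is bounded through D, and it equals
   beta^2 Lhat V / 2 when all alpha_i equal beta. *)

Set Implicit Arguments.
Unset Strict Implicit.
Unset Printing Implicit Defensive.

Import Order.TTheory GRing.Theory Num.Theory.
Import numFieldNormedType.Exports.
Local Open Scope ring_scope.

Section EuclideanInnerProduct.
Variables (R : realType) (d : nat).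
Implicit Types (u v w : 'rV[R]_d) (c : R).

Lemma dotC u v : dot u v = dot v u.
Proof. by apply: eq_bigr => j _; rewrite mulrC. Qed.

Lemma dotDl u v w : dot (u + v) w = dot u w + dot v w.
Proof. by rewrite /dot -big_split; apply: eq_bigr => j _; rewrite mxE mulrDl. Qed.

Lemma dotZl c u v : dot (c *: u) v = c * dot u v.
Proof. by rewrite /dot mulr_sumr; apply: eq_bigr => j _; rewrite mxE mulrA. Qed.

Lemma dotNl u v : dot (- u) v = - dot u v.
Proof. by rewrite -scaleN1r dotZl mulN1r. Qed.

Lemma dotBl u v w : dot (u - v) w = dot u w - dot v w.
Proof. by rewrite dotDl dotNl. Qed.

Lemma dotDr u v w : dot u (v + w) = dot u v + dot u w.
Proof. by rewrite dotC dotDl !(dotC u). Qed.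

Lemma dotZr c u v : dot u (c *: v) = c * dot u v.
Proof. by rewrite dotC dotZl dotC. Qed.

Lemma dotNr u v : dot u (- v) = - dot u v.
Proof. by rewrite dotC dotNl dotC. Qed.

Lemma dotBr u v w : dot u (v - w) = dot u v - dot u w.
Proof. by rewrite dotDr dotNr. Qed.

Lemma dot0l v : dot 0 v = 0.
Proof. by rewrite -(scale0r 0) dotZl mul0r. Qed.

Lemma dot_suml n (F : 'I_n -> 'rV[R]_d) v :
  dot (\sum_(i < n) F i) v = \sum_(i < n) dot (F i) v.
Proof. exact: (big_morph (fun u => dot u v) (fun u w => dotDl u w v) (dot0l v)). Qed.

Lemma dotxx_ge0 u : 0 <= dot u u.
Proof. by apply: sumr_ge0 => j _; rewrite -expr2 sqr_ge0. Qed.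

Lemma dotxx_eq0 u : (dot u u == 0) = (u == 0).
Proof.
apply/idP/eqP => [/eqP uu0|->]; last by rewrite dot0l.
apply/rowP => j; rewrite mxE; apply/eqP; rewrite -sqrf_eq0.
have /psumr_eq0P sq0 : \sum_(k < d) u 0 k ^+ 2 = 0.
  by rewrite -[RHS]uu0; apply: eq_bigr => k _; rewrite expr2.
by rewrite sq0 // => k _; exact: sqr_ge0.
Qed.

Lemma enorm_ge0 u : 0 <= enorm u.
Proof. exact: sqrtr_ge0. Qed.

Lemma enorm_sqr u : enorm u ^+ 2 = dot u u.
Proof. exact/sqr_sqrtr/dotxx_ge0. Qed.

Lemma enormZ c u : enorm (c *: u) = `|c| * enorm u.
Proof. by rewrite /enorm dotZl dotZr mulrA -expr2 sqrtrM ?sqr_ge0 // sqrtr_sqr. Qed.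

Lemma dot_le_enorm u v : dot u v <= enorm u * enorm v.
Proof.
set a := enorm u; set b := enorm v.
have [a0 | a_neq0] := eqVneq a 0.
  suff -> : u = 0 by rewrite dot0l a0 mul0r.
  by apply/eqP; rewrite -dotxx_eq0 -enorm_sqr -/a a0 expr0n.
have [b0 | b_neq0] := eqVneq b 0.
  suff -> : v = 0 by rewrite dotC dot0l b0 mulr0.
  by apply/eqP; rewrite -dotxx_eq0 -enorm_sqr -/b b0 expr0n.
(* expand [0 <= |b u - a v|^2 = 2 a b (a b - <u, v>)] *)
have := dotxx_ge0 (b *: u - a *: v).
rewrite !(dotBl, dotBr, dotZl, dotZr) -!enorm_sqr (dotC v u) -/a -/b => h.
have ab_gt0 : 0 < a * b by rewrite mulr_gt0 // lt0r ?a_neq0 ?b_neq0 enorm_ge0.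
rewrite -subr_ge0 -(pmulr_rge0 _ ab_gt0); nra.
Qed.

Lemma dotxx_convex_comb_le (m : nat) (w : 'I_m -> R) (u : 'I_m -> 'rV[R]_d) :
  (forall j, 0 <= w j) -> \sum_j w j = 1 ->
  dot (\sum_j w j *: u j) (\sum_j w j *: u j) <= \sum_j w j * dot (u j) (u j).
Proof.
move=> w_ge0 w_sum1; set M := \sum_j w j *: u j.
have dotMM : dot M M = \sum_j w j * dot (u j) M.
  by rewrite {1}/M dot_suml; apply: eq_bigr => j _; rewrite dotZl.
have var_ge0 : 0 <= \sum_j w j * dot (u j - M) (u j - M).
  by apply: sumr_ge0 => j _; rewrite mulr_ge0 ?dotxx_ge0.
have variance_eq : \sum_j w j * dot (u j - M) (u j - M) =
    \sum_j w j * dot (u j) (u j) - 2 * \sum_j w j * dot (u j) M + (\sum_j w j) * dot M M.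
  rewrite mulr_sumr mulr_suml -sumrB -big_split; apply: eq_bigr => j _ /=.
  by rewrite !(dotBl, dotBr) (dotC M (u j)); ring.
by move: var_ge0; rewrite variance_eq -dotMM w_sum1; lra.
Qed.

End EuclideanInnerProduct.

Lemma convex_comb_sub_le_diam (R : realType) (d m : nat) (w : 'I_m -> R)
    (p : 'I_m -> 'rV[R]_d) i :
  (forall j, 0 <= w j) -> \sum_j w j = 1 ->
  enorm (\sum_j w j *: p j - p i) ^+ 2 <=
    \big[Num.max/0]_(k < m) \big[Num.max/0]_(j < m | k != j) enorm (p k - p j) ^+ 2.
Proof.
move=> w_ge0 w_sum1; set D := \big[Num.max/0]_(k < m) _.
have D_ge0 : 0 <= D by exact: bigmax_ge_id.
have -> : \sum_j w j *: p j - p i = \sum_j w j *: (p j - p i).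
  by rewrite (eq_bigr _ (fun j _ => scalerBr _ _ _)) sumrB -scaler_suml w_sum1 scale1r.
rewrite enorm_sqr.
apply: le_trans (dotxx_convex_comb_le (fun j => p j - p i) w_ge0 w_sum1) _.
apply: le_trans (_ : _ <= \sum_j w j * D) _; last by rewrite -mulr_suml w_sum1 mul1r.
apply: ler_sum => j _; rewrite ler_wpM2l // -enorm_sqr.
have [-> | neq_ji] := eqVneq j i.
  by rewrite subrr -(scale0r 0) enormZ normr0 mul0r expr0n.
apply: le_trans (le_bigmax_cond 0 (fun k => enorm (p j - p k) ^+ 2) neq_ji) _.
exact: (le_bigmax 0
  (fun k => \big[Num.max/0]_(l < m | k != l) enorm (p k - p l) ^+ 2)).
Qed.

Lemma le_of_le_add_divS (R : realType) (a b c : R) :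
  (forall N : nat, a <= b + c / N.+1%:R) -> a <= b.
Proof.
move=> le_abc; apply/ler_addgt0Pr => e e_gt0.
have [c_le0 | c_gt0] := lerP c 0.
  by apply: le_trans (le_abc 0%N) _; rewrite divr1 lerD2l (le_trans c_le0) ?ltW.
apply: le_trans (le_abc (Num.truncn (c / e))) _; rewrite lerD2l ler_pdivrMr ?ltr0Sn //.
by rewrite mulrC -ler_pdivrMr // ltW ?truncnS_gt.
Qed.

Lemma iter_contraction (R : realType) (T : Type) (F : T -> R) (step : T -> T)
    (q c : R) :
  0 <= q -> (forall x, F (step x) - c <= q * (F x - c)) ->
  forall K x, F (iter K step x) - c <= q ^+ K * (F x - c).
Proof.
move=> q_ge0 contr; elim=> [|K IH] x; first by rewrite expr0 mul1r.
rewrite iterS exprS -mulrA; apply: le_trans (contr _) _.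
exact: ler_wpM2l.
Qed.

Section GradientStep.
Variables (R : realType) (d : nat) (F : 'rV[R]_d -> R) (a b : R).
Hypotheses (a_gt0 : 0 < a) (b_ge0 : 0 <= b).

Lemma gradient_step_contraction x z g :
  (forall y, F y <= F x + dot g (y - x) + a / 2 * dot (y - x) (y - x)) ->
  F x + dot g (z - x) + b / 2 * dot (z - x) (z - x) <= F z ->
  F (x - a^-1 *: g) - F z <= (1 - b / a) * (F x - F z).
Proof.
move=> upper lower.
have := upper (x - a^-1 *: g).
have -> : x - a^-1 *: g - x = - (a^-1 *: g) by rewrite addrAC subrr add0r.
rewrite !(dotNl, dotNr, dotZl, dotZr) opprK; set gg := dot g g.
have -> : a / 2 * (a^-1 * (a^-1 * gg)) = a^-1 * gg / 2 by field; rewrite gt_eqF.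
move=> step_le.
(* [b (F x - F z) <= |g|^2 / 2] because [0 <= |g + b (z - x)|^2] *)
set h := z - x in lower; clearbody h.
have := dotxx_ge0 (g + b *: h).
rewrite !(dotDl, dotDr, dotZl, dotZr) (dotC h g) -/gg => sq_ge0.
have gap_le : b * (F x - F z) <= gg / 2.
  have := mulr_ge0 b_ge0 (_ : 0 <= F z - (F x + dot g h + b / 2 * dot h h)).
  rewrite subr_ge0 => /(_ lower); nra.
have ainv_ge0 : 0 <= a^-1 by rewrite invr_ge0 ltW.
have := ler_wpM2r ainv_ge0 gap_le; lra.
Qed.

End GradientStep.

(* [df] stands for [grad f]; only the first-order inequalities stated as
   hypotheses are used. *)
Section LipschitzGradient.
Variables (R : realType) (d : nat) (f : 'rV[R]_d -> R).
Variables (df : 'rV[R]_d -> 'rV[R]_d) (L : R).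
Hypothesis df_lipschitz : forall x y, enorm (df x - df y) <= L * enorm (x - y).

Lemma dot_lipschitz_sub_le x y u : dot (df x - df y) u <= L * enorm (x - y) * enorm u.
Proof.
exact: le_trans (dot_le_enorm _ _) (ler_wpM2r (enorm_ge0 u) (df_lipschitz x y)).
Qed.

Hypothesis f_convex : forall x y, f y + dot (df y) (x - y) <= f x.

Lemma convex_increment_le x h a b : 0 <= b -> 0 <= a + b ->
  f (x + (a + b) *: h) - f (x + a *: h) <=
    b * dot (df x) h + L * b * (a + b) * dot h h.
Proof.
move=> b_ge0 ab_ge0; set y := x + (a + b) *: h.
have := f_convex (x + a *: h) y.
have -> : x + a *: h - y = - (b *: h).
  by rewrite /y scalerDl addrA opprD addrA subrr add0r.
rewrite dotNr dotZr => cvx.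
have : dot (df y - df x) h <= L * (a + b) * dot h h.
  apply: le_trans (dot_lipschitz_sub_le _ _ _) _.
  have -> : y - x = (a + b) *: h by rewrite /y addrAC subrr add0r.
  by rewrite enormZ ger0_norm // -enorm_sqr expr2 !mulrA lexx.
rewrite dotBl => /(ler_wpM2l b_ge0); lra.
Qed.

Lemma descent_chord x y (N : nat) :
  f y <= f x + dot (df x) (y - x) +
           L / 2 * dot (y - x) (y - x) * (1 + N.+1%:R^-1).
Proof.
set h := y - x; set s := dot (df x) h; set q := dot h h.
set t : R := N.+1%:R^-1.
have t_gt0 : 0 < t by rewrite invr_gt0 ltr0Sn.
have tN : N.+1%:R * t = 1 by rewrite mulfV ?pnatr_eq0.
clearbody t.
have partial k : f (x + (k%:R * t) *: h) - f x <=
    k%:R * t * s + L / 2 * q * t ^+ 2 * (k%:R * k.+1%:R).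
  elim: k => [|k IH]; first by rewrite !mul0r scale0r addr0 subrr mulr0 add0r.
  have kt_ge0 : 0 <= k%:R * t + t by rewrite addr_ge0 ?mulr_ge0 ?ler0n ?ltW.
  have kt_eq : k%:R * t + t = k.+1%:R * t by rewrite -natr1 mulrDl mul1r.
  have := convex_increment_le x h (ltW t_gt0) kt_ge0.
  rewrite kt_eq -/s -/q => incr.
  rewrite -(@natr1 R k) in IH incr; rewrite -(@natr1 R k.+1) -(@natr1 R k); lra.
have := partial N.+1.
have -> : x + (N.+1%:R * t) *: h = y by rewrite tN scale1r /h addrC subrK.
rewrite tN => chord.
have tsq : t ^+ 2 * (N.+1%:R * N.+2%:R) = 1 + t.
  rewrite -(@natr1 R N.+1) expr2 mulrACA (mulrC t) tN mul1r.
  by rewrite mulrDr mulr1 (mulrC t) tN.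
rewrite -mulrA tsq in chord; lra.
Qed.

Lemma descent x y :
  f y <= f x + dot (df x) (y - x) + L / 2 * dot (y - x) (y - x).
Proof.
apply: (le_of_le_add_divS (c := L / 2 * dot (y - x) (y - x))) => N.
by have := descent_chord x y N; rewrite mulrDr mulr1 addrA.
Qed.

Lemma df_eq0_at_minimizer xm : 0 < L -> (forall y, f xm <= f y) -> df xm = 0.
Proof.
move=> L_gt0 xm_min; apply/eqP; rewrite -dotxx_eq0 eq_le dotxx_ge0 andbT.
have := descent xm (xm - L^-1 *: df xm).
have -> : xm - L^-1 *: df xm - xm = - (L^-1 *: df xm) by rewrite addrAC subrr add0r.
rewrite !(dotNl, dotNr, dotZl, dotZr) opprK.
have := xm_min (xm - L^-1 *: df xm).
set gg := dot (df xm) (df xm).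
have -> : L / 2 * (L^-1 * (L^-1 * gg)) = L^-1 * gg / 2 by field; rewrite gt_eqF.
move=> ? ?; have : L^-1 * gg <= 0 by lra.
by rewrite pmulr_rle0 ?invr_gt0.
Qed.

End LipschitzGradient.

Section StrongConvexity.
Variables (R : realType) (d : nat) (f : 'rV[R]_d -> R).
Variables (df : 'rV[R]_d -> 'rV[R]_d) (mu : R).
Hypothesis f_strongly_convex :
  forall x y, f y + dot (df y) (x - y) + mu / 2 * enorm (x - y) ^+ 2 <= f x.

Lemma strongly_convex_convex : 0 <= mu -> forall x y, f y + dot (df y) (x - y) <= f x.
Proof.
move=> mu_ge0 x y; apply: le_trans (f_strongly_convex x y).
by rewrite lerDl mulr_ge0 ?divr_ge0 ?sqr_ge0.
Qed.

Lemma strongly_convex_le_lipschitz (L : R) (u : 'rV[R]_d) : u != 0 ->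
  (forall x y, enorm (df x - df y) <= L * enorm (x - y)) -> mu <= L.
Proof.
move=> u_neq0 df_lipschitz.
have uu_gt0 : 0 < dot u u by rewrite lt0r dotxx_eq0 u_neq0 dotxx_ge0.
have le_u0 := f_strongly_convex u 0; have le_0u := f_strongly_convex 0 u.
rewrite subr0 enorm_sqr in le_u0.
rewrite sub0r enorm_sqr !dotNr dotNl opprK in le_0u.
have := dot_lipschitz_sub_le df_lipschitz u 0 u.
rewrite subr0 -mulrA -expr2 enorm_sqr dotBl => lip.
by rewrite -(ler_pM2r uu_gt0); lra.
Qed.

End StrongConvexity.

Lemma mean_quadratic_model (R : realType) (d n : nat) (A c : 'I_n -> R)
    (g : 'I_n -> 'rV[R]_d) (h : 'rV[R]_d) (q : R) :
  n%:R^-1 * \sum_i A i + dot (n%:R^-1 *: \sum_i g i) h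
    + (n%:R^-1 * \sum_i c i) / 2 * q =
  n%:R^-1 * \sum_i (A i + dot (g i) h + c i / 2 * q).
Proof.
by rewrite !big_split /= dotZl dot_suml !mulrDr -2!mulr_suml !mulrA.
Qed.

Section DistributedGradientDescent.
Variables (R : realType) (d n : nat).
Variables (f : 'I_n -> 'rV[R]_d -> R) (df : 'I_n -> 'rV[R]_d -> 'rV[R]_d).
Variables (L mu alpha : 'I_n -> R) (xs : 'I_n -> 'rV[R]_d).
Hypothesis mu_gt0 : forall i, 0 < mu i.
Hypothesis df_lipschitz :
  forall i x y, enorm (df i x - df i y) <= L i * enorm (x - y).
Hypothesis f_strongly_convex : forall i x y,
  f i y + dot (df i y) (x - y) + mu i / 2 * enorm (x - y) ^+ 2 <= f i x.

Definition shift i x := alpha i *: x + (1 - alpha i) *: xs i.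
Definition ftilde x := n%:R^-1 * \sum_(i < n) f i (shift i x).
Definition dftilde x := n%:R^-1 *: \sum_(i < n) alpha i *: df i (shift i x).
Definition La := n%:R^-1 * \sum_(i < n) (alpha i ^+ 2 * L i).
Definition mua := n%:R^-1 * \sum_(i < n) (alpha i ^+ 2 * mu i).

Lemma shiftB i x y : shift i y - shift i x = alpha i *: (y - x).
Proof. by rewrite /shift opprD addrACA subrr addr0 scalerBr. Qed.

Lemma shift_xs i : shift i (xs i) = xs i.
Proof. by rewrite /shift -scalerDl addrCA subrr addr0 scale1r. Qed.

Lemma f_convex i x y : f i y + dot (df i y) (x - y) <= f i x.
Proof. exact/strongly_convex_convex/ltW/mu_gt0. Qed.

Lemma ftilde_le_model x y :
  ftilde y <= ftilde x + dot (dftilde x) (y - x) + La / 2 * dot (y - x) (y - x).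
Proof.
rewrite /ftilde /dftilde /La mean_quadratic_model.
apply: ler_wpM2l; first by rewrite invr_ge0 ler0n.
apply: ler_sum => i _.
have := descent (@df_lipschitz i) (@f_convex i) (shift i x) (shift i y).
by rewrite shiftB !(dotZl, dotZr); lra.
Qed.

Lemma model_le_ftilde x z :
  ftilde x + dot (dftilde x) (z - x) + mua / 2 * dot (z - x) (z - x) <= ftilde z.
Proof.
rewrite /ftilde /dftilde /mua mean_quadratic_model.
apply: ler_wpM2l; first by rewrite invr_ge0 ler0n.
apply: ler_sum => i _.
have := f_strongly_convex i (shift i z) (shift i x).
by rewrite shiftB enorm_sqr !(dotZl, dotZr); lra.
Qed.

Hypotheses (d_gt0 : (0 < d)%N) (n_gt0 : (0 < n)%N).
Hypothesis alpha_gt0 : forall i, 0 < alpha i.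
Hypothesis xs_min : forall i y, f i (xs i) <= f i y.

Lemma mu_le_L i : mu i <= L i.
Proof.
apply: (strongly_convex_le_lipschitz (f_strongly_convex i) (u := const_mx 1)).
  by apply/eqP => /rowP /(_ (Ordinal d_gt0)); rewrite !mxE; apply/eqP/oner_neq0.
exact: df_lipschitz.
Qed.

Lemma L_gt0 i : 0 < L i.
Proof. exact: lt_le_trans (mu_gt0 i) (mu_le_L i). Qed.

Lemma mean_gt0 (F : 'I_n -> R) : (forall i, 0 < F i) -> 0 < n%:R^-1 * \sum_i F i.
Proof.
move=> F_gt0; rewrite mulr_gt0 ?invr_gt0 ?ltr0n // (bigD1 (Ordinal n_gt0)) //=.
by rewrite ltr_wpDr ?sumr_ge0 // => i _; exact/ltW.
Qed.

Lemma La_gt0 : 0 < La.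
Proof. by apply: mean_gt0 => i; rewrite mulr_gt0 ?exprn_gt0 ?L_gt0. Qed.

Lemma mua_ge0 : 0 <= mua.
Proof. by apply/ltW/mean_gt0 => i; rewrite mulr_gt0 ?exprn_gt0. Qed.

Lemma rate_ge0 : 0 <= 1 - mua / La.
Proof.
rewrite subr_ge0 ler_pdivrMr ?La_gt0 // mul1r.
apply: ler_wpM2l; first by rewrite invr_ge0 ler0n.
by apply: ler_sum => i _; rewrite ler_wpM2l ?mu_le_L ?exprn_ge0 ?ltW.
Qed.

Definition gd_step x := x - (La^-1 / n%:R) *: \sum_(i < n) alpha i *: df i (shift i x).

Lemma gd_stepE x : gd_step x = x - La^-1 *: dftilde x.
Proof. by rewrite /gd_step /dftilde scalerA. Qed.

Lemma ftilde_gd_iter_le K x z :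
  ftilde (iter K gd_step x) - ftilde z <= (1 - mua / La) ^+ K * (ftilde x - ftilde z).
Proof.
apply: iter_contraction rate_ge0 _ K x => {}x; rewrite gd_stepE.
exact: gradient_step_contraction La_gt0 mua_ge0 _ _ _
  (ftilde_le_model x) (model_le_ftilde x z).
Qed.

Lemma ftilde_sub_le x z :
  ftilde x - ftilde z <=
    n%:R^-1 * \sum_i (alpha i ^+ 2 * L i / 2 * dot (x - xs i) (x - xs i)).
Proof.
rewrite /ftilde -mulrBr -sumrB ler_wpM2l ?invr_ge0 ?ler0n //.
apply: ler_sum => i _.
have := descent (@df_lipschitz i) (@f_convex i) (xs i) (shift i x).
rewrite (df_eq0_at_minimizer (@df_lipschitz i) (@f_convex i) (L_gt0 i) (xs_min i)).
have shift_sub_xs : shift i x - xs i = alpha i *: (x - xs i).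
  by rewrite -shiftB shift_xs.
rewrite dot0l addr0 shift_sub_xs !(dotZl, dotZr).
have := xs_min i (shift i z); lra.
Qed.

Definition weight i := alpha i ^+ 2 * L i / (n%:R * La).
Definition xavg := \sum_(i < n) weight i *: xs i.
Definition Lhat := n%:R^-1 * \sum_(i < n) L i.
Definition muhat := n%:R^-1 * \sum_(i < n) mu i.

Lemma weight_ge0 i : 0 <= weight i.
Proof.
have := ltW (alpha_gt0 i); have := ltW (L_gt0 i); have := ltW La_gt0.
by move=> ? ? ?; apply: divr_ge0; apply: mulr_ge0; rewrite ?exprn_ge0.
Qed.

Lemma weight_sum1 : \sum_i weight i = 1.
Proof.
have nLa : n%:R * La = \sum_i alpha i ^+ 2 * L i.
  by rewrite /La mulrA mulfV ?mul1r // pnatr_eq0 -lt0n.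
rewrite -mulr_suml nLa divff // -nLa mulf_neq0 // ?pnatr_eq0 -?lt0n //.
exact/lt0r_neq0/La_gt0.
Qed.

Lemma ftilde_gd_iter_le_gap K z :
  ftilde (iter K gd_step xavg) - ftilde z <=
    (1 - mua / La) ^+ K *
    (n%:R^-1 * \sum_i (alpha i ^+ 2 * L i / 2 * dot (xavg - xs i) (xavg - xs i))).
Proof.
apply: le_trans (ftilde_gd_iter_le K xavg z) _.
by rewrite ler_wpM2l ?exprn_ge0 ?rate_ge0 ?ftilde_sub_le.
Qed.

Lemma gap_xavg_le_diam :
  n%:R^-1 * \sum_i (alpha i ^+ 2 * L i / 2 * dot (xavg - xs i) (xavg - xs i)) <=
  (\big[Num.max/0]_(i < n) alpha i) ^+ 2 * Lhat *
    (\big[Num.max/0]_(i < n) \big[Num.max/0]_(j < n | i != j)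
       enorm (xs i - xs j) ^+ 2) / 2.
Proof.
set amax := \big[Num.max/0]_(i < n) alpha i; set D := \big[Num.max/0]_(i < n) _.
have -> : amax ^+ 2 * Lhat * D / 2 = n%:R^-1 * \sum_i (amax ^+ 2 * L i / 2 * D).
  by rewrite /Lhat -!mulr_suml -mulr_sumr; ring.
apply: ler_wpM2l; first by rewrite invr_ge0 ler0n.
apply: ler_sum => i _.
have alpha_ge0 := ltW (alpha_gt0 i); have L_ge0 := ltW (L_gt0 i).
have alpha_le : alpha i <= amax by exact: le_bigmax.
have amax_ge0 := le_trans alpha_ge0 alpha_le.
apply: ler_pM; rewrite ?dotxx_ge0 ?mulr_ge0 ?exprn_ge0 //.
  by rewrite ler_wpM2r ?invr_ge0 ?ler0n // ler_wpM2r // ler_sqr ?nnegrE.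
by rewrite -enorm_sqr; exact: convex_comb_sub_le_diam weight_ge0 weight_sum1.
Qed.

Lemma gd_gap_le_diam K z :
  ftilde (iter K gd_step xavg) - ftilde z <=
    (1 - mua / La) ^+ K *
    ((\big[Num.max/0]_(i < n) alpha i) ^+ 2 * Lhat *
      (\big[Num.max/0]_(i < n) \big[Num.max/0]_(j < n | i != j)
         enorm (xs i - xs j) ^+ 2) / 2).
Proof.
apply: le_trans (ftilde_gd_iter_le_gap K z) _.
by rewrite ler_wpM2l ?exprn_ge0 ?rate_ge0 ?gap_xavg_le_diam.
Qed.

Section EqualScalings.
Variable beta : R.
Hypothesis alpha_beta : forall i, alpha i = beta.

Lemma beta_gt0 : 0 < beta.
Proof. by have := alpha_gt0 (Ordinal n_gt0); rewrite alpha_beta. Qed.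

Lemma Lhat_gt0 : 0 < Lhat.
Proof. exact: mean_gt0 L_gt0. Qed.

Lemma La_beta : La = beta ^+ 2 * Lhat.
Proof.
rewrite /La /Lhat mulrCA [in RHS]mulr_sumr; congr (_ * _).
by apply: eq_bigr => i _; rewrite alpha_beta.
Qed.

Lemma mua_beta : mua = beta ^+ 2 * muhat.
Proof.
rewrite /mua /muhat mulrCA [in RHS]mulr_sumr; congr (_ * _).
by apply: eq_bigr => i _; rewrite alpha_beta.
Qed.

Lemma rate_beta : mua / La = muhat / Lhat.
Proof.
have := beta_gt0; have := Lhat_gt0 => ? ?.
by rewrite La_beta mua_beta; field; rewrite !gt_eqF ?exprn_gt0.
Qed.

Lemma gap_xavg_beta :
  n%:R^-1 * \sum_i (alpha i ^+ 2 * L i / 2 * dot (xavg - xs i) (xavg - xs i)) =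
  beta ^+ 2 * Lhat * (\sum_i weight i * enorm (xs i - xavg) ^+ 2) / 2.
Proof.
have n_neq0 : n%:R != 0 :> R by rewrite pnatr_eq0 -lt0n.
have := beta_gt0; have := Lhat_gt0 => ? ?.
rewrite mulr_sumr !mulr_suml mulr_sumr; apply: eq_bigr => i _.
rewrite enorm_sqr -opprB dotNl dotNr opprK /weight La_beta alpha_beta.
by field; rewrite n_neq0 !gt_eqF ?exprn_gt0.
Qed.

Lemma gd_gap_le_variance K z :
  ftilde (iter K gd_step xavg) - ftilde z <=
    (1 - muhat / Lhat) ^+ K *
    (beta ^+ 2 * Lhat * (\sum_i weight i * enorm (xs i - xavg) ^+ 2) / 2).
Proof. by rewrite -rate_beta -gap_xavg_beta; exact: ftilde_gd_iter_le_gap. Qed.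

End EqualScalings.

End DistributedGradientDescent.

Theorem theorem2 (R : realType) (d n : nat) (hn : (0 < n)%N)
  (f : 'I_n -> 'rV[R]_d -> R) (L mu : 'I_n -> R) (xs : 'I_n -> 'rV[R]_d)
  (alpha : 'I_n -> R)
  (hmu : forall i, 0 < mu i)
  (hsmooth : forall i, smooth (L i) (f i))
  (hconv : forall i, strongly_convex (mu i) (f i))
  (hmin : forall i y, f i (xs i) <= f i y)
  (halpha : forall i, 0 < alpha i < 1) :
  let ftilde := fun x : 'rV[R]_d =>
    n%:R^-1 * \sum_(i < n) f i (alpha i *: x + (1 - alpha i) *: xs i) in
  let Lhat := n%:R^-1 * \sum_(i < n) L i in
  let muhat := n%:R^-1 * \sum_(i < n) mu i in
  let La := n%:R^-1 * \sum_(i < n) (alpha i ^+ 2 * L i) in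
  let mua := n%:R^-1 * \sum_(i < n) (alpha i ^+ 2 * mu i) in
  let w := fun i => alpha i ^+ 2 * L i / (n%:R * La) in
  let xavg := \sum_(i < n) w i *: xs i in
  let D := \big[Num.max/0]_(i < n) \big[Num.max/0]_(j < n | i != j)
             enorm (xs i - xs j) ^+ 2 in
  let V := \sum_(i < n) w i * enorm (xs i - xavg) ^+ 2 in
  let gamma := La^-1 in
  let step := fun x : 'rV[R]_d =>
    x - (gamma / n%:R) *: \sum_(i < n)
          (alpha i *: grad (f i) (alpha i *: x + (1 - alpha i) *: xs i)) in
  let xK := fun K : nat => iter K step xavg in
  let amax := \big[Num.max/0]_(i < n) alpha i in
  forall K : nat,
    (forall z, ftilde (xK K) - ftilde z <=
       (1 - mua / La) ^+ K * (amax ^+ 2 * Lhat * D / 2)) /\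
    (forall beta : R, (forall i, alpha i = beta) ->
     forall z, ftilde (xK K) - ftilde z <=
       (1 - muhat / Lhat) ^+ K * (beta ^+ 2 * Lhat * V / 2)).
Proof.
move=> ftilde Lhat muhat La mua w xavg D V gamma step xK amax K.
have [d0 | d_gt0] := posnP d.
  (* in dimension 0 nothing forces [mu i <= L i], but every point is optimal *)
  subst d.
  have enorm0 (u : 'rV[R]_0) : enorm u = 0 by rewrite /enorm /dot big_ord0 sqrtr0.
  have -> : D = 0.
    rewrite /D !bigmax_eq_id // => i _.
    by rewrite ?bigmax_eq_id // => j _; rewrite enorm0 expr0n.
  have -> : V = 0 by rewrite /V big1 // => i _; rewrite enorm0 expr0n mulr0.
  have xK_eq z : xK K = z by apply/rowP => -[].
  by split => [z | beta _ z]; rewrite (xK_eq z) subrr ?(mulr0, mul0r).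
have alpha_gt0 i : 0 < alpha i by case/andP: (halpha i).
have df_lipschitz i := (hsmooth i).2.
split => [z | beta alpha_beta z].
  exact: (gd_gap_le_diam hmu df_lipschitz hconv d_gt0 hn alpha_gt0 hmin).
exact: (gd_gap_le_variance hmu df_lipschitz hconv d_gt0 hn alpha_gt0 hmin alpha_beta).
Qed.
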